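(* Let $n \geq 1$, $r \geq 1$, $k \geq 0$ be integers, and suppose that either (1) $n \geq 3r^2 + 100$, $r \geq 2$, and $k \leq 4r$; or (2) $k \leq \frac{n}{\ln(n+1) + 1} - r$. Then \[E_r(n,k) \geq 0.6 \binom{k+r-1}{r-1}(k+r)^n.\]
   Context: The $r$th order Eulerian number $E_r(n,k)$ is the number of pairs $(w, S)$ with $w$ a permutation of $\{1, \ldots, n\}$ and $S \subset \{1, \ldots, n-1\}$ of size $r-1$ such that exactly $k$ indices $i \in \{1,\ldots,n-1\} \setminus S$ satisfy $w(i) > w(i+1)$. *)

From mathcomp Require Import all_boot all_order all_fingroup.
From Stdlib Require Import Reals.
Set Implicit Arguments. Unset Strict Implicit. Unset Printing Implicit Defensive.

(* 0-based encoding: positions 1..n of the paper are 0..n-1 ('I_n);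
   the adjacent-pair index i in {1,...,n-1} of the paper is j = i-1 : 'I_n.-1,
   comparing positions j and j+1. *)

Definition wseq (n : nat) (w : 'S_n) : seq nat := [seq nat_of_ord (w i) | i <- enum 'I_n].

Definition descent_at (n : nat) (w : 'S_n) (j : nat) : bool :=
  (j.+1 < n) && (nth 0 (wseq w) j > nth 0 (wseq w) j.+1).

Definition des_off (n : nat) (w : 'S_n) (S : {set 'I_n.-1}) : nat :=
  #|[set j : 'I_n.-1 | (j \notin S) && descent_at w j]|.

Definition eulerian_r (r n k : nat) : nat :=
  #|[set p : 'S_n * {set 'I_n.-1} |
      (#|p.2| == r.-1) && (des_off p.1 p.2 == k)]|.

(* Standardize a word f : [n] -> [m] by listing its positions in increasing order of
   (letter, position).  If f is fully inverted, i.e. for every j < m - 1 some letter j + 1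
   occurs before some letter j, the descents of the resulting permutation are exactly the
   m - 1 ends of the letter blocks, and f can be read back from it (f p counts the descents
   below the rank of p).  Letting k of these descents count and putting the other r - 1 into
   S injects (fully inverted words) x (k-subsets of the m - 1 block ends) into the pairs
   counted by E_r(n, k) when m = k + r.  A word that is not fully inverted is determined by
   the word obtained by merging the letters of its least uninverted pair j, j + 1, together
   with the last position of j, so there are at most (n + 1)(m - 1)^n of them.  Finally
   (n + 1)(1 - 1/m)^n <= (n + 1) e^(-n/m) <= 0.4 under either hypothesis. *)

From mathcomp Require Import all_boot all_order all_fingroup.
From Stdlib Require Import Reals.
From mathcomp Require Import zify.
From Stdlib Require Import Lra Lia.
Set Implicit Arguments. Unset Strict Implicit. Unset Printing Implicit Defensive.

Lemma card_ord_lt a c : c <= a -> #|[set j : 'I_a | j < c]| = c.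
Proof.
move=> le_ca; have widen_inj : injective (widen_ord le_ca).
  by move=> x y /(congr1 val) eq_xy; apply: val_inj.
rewrite -[RHS]card_ord -(card_imset _ widen_inj); apply: eq_card => j; rewrite inE.
apply/idP/imsetP => [lt_jc | [i _ ->]]; last exact: (ltn_ord i).
by exists (Ordinal lt_jc) => //; apply: val_inj.
Qed.

Lemma nth_wseq n (w : 'S_n) i (lt_in : i < n) : nth 0 (wseq w) i = w (Ordinal lt_in).
Proof.
rewrite /wseq (nth_map (Ordinal lt_in)) ?size_enum_ord //.
by congr (nat_of_ord (w _)); apply: val_inj; rewrite /= nth_enum_ord.
Qed.

Section Standardization.
Variables (n m : nat) (f : {ffun 'I_n -> 'I_m}).

Definition std_lt (p q : 'I_n) := (f p < f q) || (f p == f q :> nat) && (p < q).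

Definition std_rank (p : 'I_n) := #|[set q | std_lt q p]|.

Lemma std_lt_total p q : p != q -> std_lt p q || std_lt q p.
Proof. by rewrite -(inj_eq (@ord_inj n)) /std_lt; lia. Qed.

Lemma std_rank_ltE p q : (std_rank p < std_rank q) = std_lt p q.
Proof.
have rank_mono x y : std_lt x y -> std_rank x < std_rank y.
  move=> lt_xy; apply/proper_card/properP; split.
    by apply/subsetP => z; rewrite !inE; move: lt_xy; rewrite /std_lt; lia.
  by exists x; rewrite !inE // /std_lt !ltnn andbF.
apply/idP/idP => [lt_pq | /rank_mono //].
have [eq_pq | /std_lt_total] := eqVneq p q; first by rewrite eq_pq ltnn in lt_pq.
by case/orP=> // /rank_mono; lia.
Qed.

Lemma std_rank_lt_n p : std_rank p < n.
Proof.
rewrite -[n in _ < n]card_ord; apply/proper_card/properP; split; first exact: subset_predT.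
by exists p; rewrite !inE // /std_lt !ltnn andbF.
Qed.

Definition std_rank_ord p := Ordinal (std_rank_lt_n p).

Lemma std_rank_ord_inj : injective std_rank_ord.
Proof.
move=> p q /(congr1 val) /= eq_rank; apply/eqP; apply: contraT => /std_lt_total.
by rewrite -!std_rank_ltE eq_rank ltnn.
Qed.

Definition std_perm : 'S_n := ((perm std_rank_ord_inj)^-1)%g.

Lemma std_permV p : (std_perm^-1)%g p = std_rank_ord p.
Proof. by rewrite invgK permE. Qed.

Lemma std_rank_perm i : std_rank (std_perm i) = i.
Proof. by have := congr1 val (permKV (perm std_rank_ord_inj) i); rewrite permE. Qed.

Definition count_le (j : nat) := #|[set q | f q <= j]|.

Lemma std_rank_lt_count p j : (std_rank p < count_le j) = (f p <= j).
Proof.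
apply/idP/idP => [| le_fp_j].
  apply: contraTT; rewrite -!leqNgt => lt_j_fp.
  by apply/subset_leq_card/subsetP => q; rewrite !inE /std_lt; lia.
apply/proper_card/properP; split; first by apply/subsetP => q; rewrite !inE /std_lt; lia.
by exists p; rewrite !inE // /std_lt !ltnn andbF.
Qed.

Lemma std_rank_le_pos x y : std_rank x <= std_rank y -> f y <= f x -> x <= y.
Proof.
move=> le_rank le_f; have [-> // | ne_xy] := eqVneq x y.
have : std_lt x y.
  rewrite -std_rank_ltE ltn_neqAle le_rank andbT; apply: contra ne_xy => /eqP eq_rank.
  by apply/eqP/std_rank_ord_inj/val_inj.
by rewrite /std_lt; lia.
Qed.

Definition inverted_at (j : nat) :=
  [exists p : 'I_n, exists q : 'I_n, [&& p < q, f p == j.+1 :> nat & f q == j :> nat]].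

Definition fully_inverted := [forall j : 'I_m.-1, inverted_at j].

Definition block_end (j : nat) := (count_le j).-1.

Definition block_ends (T : {set 'I_m.-1}) : {set 'I_n.-1} :=
  [set i : 'I_n.-1 | [exists j in T, val i == block_end j]].

Hypothesis f_inv : fully_inverted.

Lemma fully_inverted_at j : j.+1 < m ->
  exists p q : 'I_n, [/\ p < q, f p = j.+1 :> nat & f q = j :> nat].
Proof.
move=> lt_jm; have lt_j : j < m.-1 by lia.
have /existsP [p /existsP [q /and3P [lt_pq /eqP fp /eqP fq]]] := forallP f_inv (Ordinal lt_j).
by exists p, q.
Qed.

Lemma count_le_gt0 j : j.+1 < m -> 0 < count_le j.
Proof.
by case/fully_inverted_at => _ [q [_ _ fq]]; apply/card_gt0P; exists q; rewrite inE fq.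
Qed.

Lemma count_le_lt j j' : j < j' -> j' < m -> count_le j < count_le j'.
Proof.
move=> lt_jj' lt_j'm; have [p [_ [_ fp _]]] := fully_inverted_at (leq_ltn_trans lt_jj' lt_j'm).
apply/proper_card/properP; split; first by apply/subsetP => q; rewrite !inE; lia.
by exists p; rewrite !inE fp; lia.
Qed.

Lemma block_end_lt (j : 'I_m.-1) : block_end j < n.-1.
Proof.
have lt_jm : j.+1 < m by rewrite -ltn_predRL.
have := count_le_gt0 lt_jm; have := count_le_lt (ltnSn j) lt_jm.
have : count_le j.+1 <= n by rewrite -[n in _ <= n]card_ord max_card.
rewrite /block_end; lia.
Qed.

Let block_end_ord (j : 'I_m.-1) : 'I_n.-1 := Ordinal (block_end_lt j).

Lemma block_end_ord_inj : injective block_end_ord.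
Proof.
move=> j j' /(congr1 val) /=; rewrite /block_end => eq_end; apply: val_inj => /=.
have lt_jm : j.+1 < m by rewrite -ltn_predRL.
have lt_j'm : j'.+1 < m by rewrite -ltn_predRL.
have := count_le_gt0 lt_jm; have := count_le_gt0 lt_j'm.
case: (ltngtP j j') => // [lt_jj' | lt_j'j].
  by have := count_le_lt lt_jj' (ltnW lt_j'm); lia.
by have := count_le_lt lt_j'j (ltnW lt_jm); lia.
Qed.

Lemma block_endsE T : block_ends T = block_end_ord @: T.
Proof.
apply/setP => i; rewrite inE; apply/existsP/imsetP => [[j /andP [jT /eqP i_end]] | [j jT ->]].
  by exists j => //; apply: val_inj.
by exists j; rewrite jT /=.
Qed.

Lemma descent_std_perm (i : 'I_n.-1) : descent_at std_perm i = (i \in block_ends setT).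
Proof.
have lt_in : i.+1 < n by have := ltn_ord i; lia.
have lt_i : i < n by lia.
rewrite /descent_at lt_in (nth_wseq _ lt_i) (nth_wseq _ lt_in) inE /=.
set p := std_perm (Ordinal lt_i); set q := std_perm (Ordinal lt_in).
have rank_p : std_rank p = i := std_rank_perm _.
have rank_q : std_rank q = i.+1 := std_rank_perm _.
have lt_pq : std_lt p q by rewrite -std_rank_ltE rank_p rank_q.
apply/idP/existsP => [lt_qp | [j /andP [_ /eqP i_end]]].
  have lt_f : f p < f q by move: lt_pq lt_qp; rewrite /std_lt; lia.
  have count_fp : count_le (f p) = i.+1.
    have := std_rank_lt_count p (f p); have := std_rank_lt_count q (f p).
    by rewrite rank_p rank_q leqnn; lia.
  have lt_fp : f p < m.-1 by have := ltn_ord (f q); lia.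
  by exists (Ordinal lt_fp); rewrite in_setT /block_end /= count_fp.
have lt_jm : j.+1 < m by rewrite -ltn_predRL.
have [a [b [lt_ab fa fb]]] := fully_inverted_at lt_jm.
have count_j : count_le j = i.+1 by have := count_le_gt0 lt_jm; rewrite /block_end in i_end; lia.
have fp_le : f p <= j by rewrite -std_rank_lt_count rank_p count_j.
have fq_gt : j < f q by rewrite ltnNge -std_rank_lt_count rank_q count_j ltnn.
have le_bp : b <= p.
  by apply: std_rank_le_pos; [rewrite rank_p -ltnS -count_j std_rank_lt_count fb | lia].
have le_qa : q <= a.
  by apply: std_rank_le_pos; [rewrite rank_q -count_j leqNgt std_rank_lt_count fa ltnn | lia].
lia.
Qed.

Lemma card_block_ends T : #|block_ends T| = #|T|.
Proof. by rewrite block_endsE card_imset //; exact: block_end_ord_inj. Qed.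

Lemma block_ends_inj : injective block_ends.
Proof. by move=> A B; rewrite !block_endsE; apply: (imset_inj block_end_ord_inj). Qed.

Lemma des_off_std_perm T : des_off std_perm (block_ends (~: T)) = #|T|.
Proof.
rewrite /des_off -card_block_ends; apply: eq_card => i.
rewrite inE descent_std_perm !block_endsE.
apply/andP/imsetP => [[notC /imsetP [j _ i_end]] | [j jT ->]].
  by exists j => //; move: notC; rewrite i_end mem_imset ?inE ?negbK //; exact: block_end_ord_inj.
by rewrite !mem_imset ?inE ?negbK //; exact: block_end_ord_inj.
Qed.

Lemma block_end_lt_rank (j : 'I_m.-1) p : (block_end j < std_rank p) = (j < f p).
Proof.
have lt_jm : j.+1 < m by rewrite -ltn_predRL.
by have := count_le_gt0 lt_jm; have := std_rank_lt_count p j; rewrite /block_end; lia.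
Qed.

Lemma std_perm_descents_below p :
  (f p : nat) = #|[set i : 'I_n.-1 | descent_at std_perm i & i < std_rank p]|.
Proof.
have -> : [set i : 'I_n.-1 | descent_at std_perm i & i < std_rank p] =
          block_end_ord @: [set j : 'I_m.-1 | j < f p].
  apply/setP => i; rewrite inE descent_std_perm block_endsE.
  apply/andP/imsetP => [[/imsetP [j _ ->]] | [j]].
    by rewrite /= block_end_lt_rank => lt_j; exists j; rewrite ?inE.
  by rewrite inE -block_end_lt_rank => lt_j ->; rewrite imset_f.
rewrite card_imset; last exact: block_end_ord_inj.
by rewrite card_ord_lt //; have := ltn_ord (f p); lia.
Qed.

End Standardization.

Lemma std_perm_inj n m (f g : {ffun 'I_n -> 'I_m}) :
  fully_inverted f -> fully_inverted g -> std_perm f = std_perm g -> f = g.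
Proof.
move=> f_inv g_inv eq_perm; apply/ffunP => p; apply: ord_inj.
have eq_rank : std_rank f p = std_rank g p.
  by have := congr1 (fun w : 'S_n => val ((w^-1)%g p)) eq_perm; rewrite /= !std_permV.
by rewrite (std_perm_descents_below f_inv) (std_perm_descents_below g_inv) eq_perm eq_rank.
Qed.

Lemma eulerian_r_ge_fully_inverted n k r : 0 < r ->
  #|[set f : {ffun 'I_n -> 'I_(k + r)} | fully_inverted f]| * 'C((k + r).-1, k)
    <= eulerian_r r n k.
Proof.
move=> r_pos.
set F := [set f | fully_inverted f]; set Ts := [set T : {set 'I_(k + r).-1} | #|T| == k].
pose code (x : {ffun 'I_n -> 'I_(k + r)} * {set 'I_(k + r).-1}) :=
  (std_perm x.1, block_ends x.1 (~: x.2)).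
have code_inj : {in setX F Ts &, injective code}.
  move=> [f T] [g U]; rewrite !inE /= => /andP [f_inv _] /andP [g_inv _] [eq_perm].
  have <- := std_perm_inj f_inv g_inv eq_perm.
  by move=> /(block_ends_inj f_inv) /setC_inj ->.
have card_Ts : #|Ts| = 'C((k + r).-1, k) by rewrite card_draws card_ord.
rewrite -card_Ts -cardsX -(card_in_imset code_inj).
apply/subset_leq_card/subsetP => _ /imsetP [[f T] /setXP [] /= f_inv T_k ->].
move: f_inv T_k; rewrite !inE => f_inv /eqP card_T.
rewrite /= card_block_ends // des_off_std_perm // card_T eqxx andbT.
by have := cardsC T; rewrite card_ord card_T => ?; apply/eqP; lia.
Qed.

Section Uninverted.
Variables n m : nat.
Implicit Types (f : {ffun 'I_n -> 'I_m.+2}) (c : option 'I_n * {ffun 'I_n -> 'I_m.+1}).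

Definition first_gap f := find (fun j => ~~ inverted_at f j) (iota 0 m.+1).

Lemma first_gapP f : ~~ fully_inverted f ->
  [/\ first_gap f < m.+1, ~~ inverted_at f (first_gap f)
    & forall i, i < first_gap f -> inverted_at f i].
Proof.
move=> /forallPn [j0 not_inv].
have has_gap : has (fun j => ~~ inverted_at f j) (iota 0 m.+1).
  by apply/hasP; exists (val j0); rewrite ?mem_iota /=.
have lt_gap : first_gap f < m.+1 by rewrite -(size_iota 0 m.+1) -has_find.
split => //; first by have := nth_find 0 has_gap; rewrite nth_iota.
by move=> i lt_i; have := before_find 0 lt_i; rewrite nth_iota ?add0n => [/negbFE | ]; lia.
Qed.

Definition last_at f (j : nat) : option 'I_n :=
  [pick p | (f p == j :> nat) && [forall q, (f q == j :> nat) ==> (q <= p)]].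

Definition gap_code f : option 'I_n * {ffun 'I_n -> 'I_m.+1} :=
  (last_at f (first_gap f), [ffun p => inord (unbump (first_gap f) (f p))]).

(* With s the last position of the letter j, the merged letter j = g s stands for j up to
   position s and for j + 1 after it; without any j the least gap is j = 0. *)
Definition gap_decode c : {ffun 'I_n -> 'I_m.+2} :=
  let: (last_pos, g) := c in
  [ffun p => inord (if last_pos is Some s then
                      if (g p == g s :> nat) && (p <= s) then nat_of_ord (g s) else bump (g s) (g p)
                    else bump 0 (g p))].

Lemma gap_codeK : {in [set f | ~~ fully_inverted f], cancel gap_code gap_decode}.
Proof.
move=> f; rewrite inE => /first_gapP [lt_gap no_inv inv_below].
apply/ffunP => p; rewrite /gap_decode ffunE -[RHS]inord_val; congr inord.
rewrite /gap_code /last_at; set j := first_gap f in lt_gap no_inv inv_below *.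
have code_val q : ([ffun p => inord (unbump j (f p))] q : 'I_m.+1) = unbump j (f q) :> nat.
  by rewrite ffunE inordK //; have := ltn_ord (f q); rewrite /unbump; case: ltnP; lia.
case: pickP => [s /andP [/eqP fs /forallP s_last] | no_last]; rewrite !code_val.
  have unbump_jj : unbump j j = j by rewrite /unbump ltnn subn0.
  rewrite fs unbump_jj; have [fpj | fpj] := eqVneq (f p : nat) j.
    by rewrite fpj unbump_jj eqxx (implyP (s_last p)) ?fpj.
  rewrite unbumpK ?inE // ifN //; apply/negP => /andP [/eqP eq_j le_ps].
  have fp_succ : f p = j.+1 :> nat by move: eq_j fpj; rewrite /unbump; case: ltnP; lia.
  have ne_ps : (p : nat) != s.
    by rewrite (inj_eq (@ord_inj n)); apply: contraNneq fpj => ->; rewrite fs.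
  case/negP: no_inv; apply/existsP; exists p; apply/existsP; exists s.
  by rewrite fp_succ fs !eqxx !andbT; lia.
have no_j q : f q != j :> nat.
  apply/eqP => fqj; have [s fs s_max] := @arg_maxnP _ q (fun p => f p == j :> nat) val (introT eqP fqj).
  have := no_last s; rewrite fs; case/negP; apply/forallP => q'; apply/implyP; exact: s_max.
have j0 : j = 0.
  apply/eqP; rewrite -leqn0 leqNgt; apply/negP => j_pos.
  have := inv_below j.-1; rewrite ltn_predL => /(_ j_pos) /existsP [q /existsP [q']].
  by case/and3P => _ /eqP fq _; have := no_j q; rewrite fq prednK ?eqxx.
by rewrite -j0 unbumpK // inE no_j.
Qed.

(* [expn], since [^] in nat_scope is [Nat.pow] once Reals is loaded. *)
Lemma card_not_fully_inverted :
  #|[set f : {ffun 'I_n -> 'I_m.+2} | ~~ fully_inverted f]| <= n.+1 * expn m.+1 n.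
Proof.
rewrite -(card_in_imset (can_in_inj gap_codeK)).
have := max_card (mem (gap_code @: [set f | ~~ fully_inverted f])).
by rewrite card_prod card_option card_ffun !card_ord.
Qed.

End Uninverted.

Lemma card_fully_inverted_ge n m :
  expn m n <= #|[set f : {ffun 'I_n -> 'I_m} | fully_inverted f]| + n.+1 * expn m.-1 n.
Proof.
have := cardsC [set f : {ffun 'I_n -> 'I_m} | fully_inverted f]; rewrite card_ffun !card_ord.
have -> : ~: [set f : {ffun 'I_n -> 'I_m} | fully_inverted f] = [set f | ~~ fully_inverted f].
  by apply/setP => f; rewrite !inE.
move=> split_card; have [m_le1 | m_gt1] := leqP m 1.
  have no_gap : [set f : {ffun 'I_n -> 'I_m} | ~~ fully_inverted f] = set0.
    by apply/setP => f; rewrite !inE; apply/negbF/forallP => j; have := ltn_ord j; lia.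
  by rewrite no_gap cards0 in split_card; lia.
case: m m_gt1 split_card => [|[|m]] // _ split_card.
by rewrite -split_card leq_add2l; apply: card_not_fully_inverted.
Qed.

Open Scope R_scope.

Lemma exp_le x y : x <= y -> exp x <= exp y.
Proof. by case=> [/exp_increasing/Rlt_le | ->]; [| apply: Rle_refl]. Qed.

Lemma exp_INR_mult (N : nat) x : exp (INR N * x) = exp x ^ N.
Proof.
elim: N => [|N IH]; first by rewrite Rmult_0_l exp_0.
by rewrite S_INR Rmult_plus_distr_r Rmult_1_l exp_plus IH /= Rmult_comm.
Qed.

Lemma pow_le_exp (N : nat) x : (0 < N)%nat -> 0 <= x -> (1 + x / INR N) ^ N <= exp x.
Proof.
move=> /ltP/lt_0_INR N_pos x_ge0.
have -> : exp x = exp (x / INR N) ^ N by rewrite -exp_INR_mult; congr exp; field; lra.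
apply: pow_incr; split; last exact: exp_ineq1_le.
have : 0 <= x / INR N by apply: Rmult_le_pos; last by left; apply: Rinv_0_lt_compat.
lra.
Qed.

Lemma exp_1_ge : 2.5 <= exp 1.
Proof. by have := @pow_le_exp 8 1 isT ltac:(lra); rewrite INR_IZR_INZ /=; lra. Qed.

Lemma exp_6_92_ge : 840 <= exp 6.92.
Proof. by have := @pow_le_exp 128 6.92 isT ltac:(lra); rewrite INR_IZR_INZ /=; lra. Qed.

Lemma exp_7_5_ge : 1003 <= exp 7.5.
Proof. by have := @pow_le_exp 128 7.5 isT ltac:(lra); rewrite INR_IZR_INZ /=; lra. Qed.

Lemma exp_8_ge : 2000 <= exp 8.
Proof. by have := @pow_le_exp 128 8 isT ltac:(lra); rewrite INR_IZR_INZ /=; lra. Qed.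

Lemma exp_div_ge_log N M : 1 <= N -> 0 < M -> M <= N / (ln (N + 1) + 1) ->
  2.5 * (N + 1) <= exp (N / M).
Proof.
move=> N_ge1 M_pos le_M.
have ln_pos : 0 < ln (N + 1) by rewrite -ln_1; apply: ln_increasing; lra.
have le_ML : M * (ln (N + 1) + 1) <= N.
  have := Rmult_le_compat_r _ _ _ (ltac:(lra) : 0 <= ln (N + 1) + 1) le_M.
  by rewrite /Rdiv Rmult_assoc Rinv_l ?Rmult_1_r //; lra.
have NM : N / M * M = N by field; lra.
have /exp_le : ln (N + 1) + 1 <= N / M by nra.
rewrite exp_plus exp_ln; last lra.
by have := exp_1_ge; nra.
Qed.

(* X = N / M >= 3 M / 25 + 100 / M >= 6.92; on each of the ranges [6.92, 7.5), [7.5, 8)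
   and [8, oo) of X the constraint bounds M, hence N + 1 = X M + 1. *)
Lemma exp_div_ge_quadratic N M : 0 < M -> 3 * M ^ 2 + 2500 <= 25 * N ->
  2.5 * (N + 1) <= exp (N / M).
Proof.
move=> M_pos le_N.
set X := N / M.
have NX : N = X * M by rewrite /X; field; lra.
rewrite NX in le_N *.
have X_ge : 6.92 <= X by have := pow2_ge_0 (M - 173 / 6); nra.
case: (Rle_or_lt 8 X) => X_ge8.
  have growth : 2000 * (1 + (X - 8) / 2) ^ 2 <= exp X.
    have -> : exp X = exp 8 * exp (X - 8) by rewrite -exp_plus; congr exp; ring.
    apply: Rmult_le_compat; [lra | apply: pow2_ge_0 | exact: exp_8_ge |].
    by have := @pow_le_exp 2 (X - 8) isT ltac:(lra); rewrite INR_IZR_INZ.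
  have : X * M <= 25 / 3 * X ^ 2 by nra.
  nra.
case: (Rle_or_lt 7.5 X) => X_ge75.
  have M_lt : M < 50 by nra.
  by have := exp_le X_ge75; have := exp_7_5_ge; nra.
have M_lt : M < 43.3 by nra.
by have := exp_le X_ge; have := exp_6_92_ge; nra.
Qed.

Lemma succ_mul_pow_pred_le (n : nat) M : 1 <= M -> 2.5 * (INR n + 1) <= exp (INR n / M) ->
  (INR n + 1) * (M - 1) ^ n <= 0.4 * M ^ n.
Proof.
move=> M_ge1 large_exp.
have pred_le : M - 1 <= M * exp (- / M).
  have := Rmult_le_compat_l M _ _ (Rle_trans _ _ _ Rle_0_1 M_ge1) (exp_ineq1_le (- / M)).
  have : M * / M = 1 by field; lra.
  lra.
have := pow_incr (M - 1) _ n (conj (ltac:(lra) : 0 <= M - 1) pred_le).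
rewrite Rpow_mult_distr -exp_INR_mult.
have -> : INR n * - / M = - (INR n / M) by rewrite /Rdiv; ring.
rewrite exp_Ropp => pred_pow.
set E := exp (INR n / M) in large_exp pred_pow *.
have E_pos : 0 < E := exp_pos _.
have ratio_ge0 : 0 <= M ^ n * / E.
  by apply: Rmult_le_pos; [apply: pow_le; lra | left; apply: Rinv_0_lt_compat].
have : E * (M ^ n * / E) = M ^ n by field; lra.
have := Rmult_le_compat_l (INR n + 1) _ _ ltac:(have := pos_INR n; lra) pred_pow.
have := Rmult_le_compat_r _ _ _ ratio_ge0 large_exp.
lra.
Qed.

Lemma INR_expn a b : INR (expn a b) = INR a ^ b.
Proof. by elim: b => [|b IH]; rewrite ?expn0 // expnS mult_INR IH. Qed.

Theorem lemma2p8 (n r k : nat) :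
  (1 <= n)%nat -> (1 <= r)%nat ->
  ( (INR n >= 3 * INR r ^ 2 + 100 /\ (2 <= r)%nat /\ (k <= 4 * r)%nat)
    \/ INR k <= INR n / (ln (INR n + 1) + 1) - INR r ) ->
  INR (eulerian_r r n k) >= (6 / 10) * INR 'C(k + r - 1, r - 1) * INR (k + r) ^ n.
Proof.
move=> n_pos r_pos hyp; apply: Rle_ge.
have binE : 'C(k + r - 1, r - 1) = 'C((k + r).-1, k) by rewrite -bin_sub; [congr 'C(_, _) | ]; lia.
have lower := eulerian_r_ge_fully_inverted n k r_pos.
have count := card_fully_inverted_ge n (k + r).
have n_ge1 : 1 <= INR n by apply: (le_INR 1); apply/leP.
have r_ge1 : 1 <= INR r by apply: (le_INR 1); apply/leP.
have k_ge0 := pos_INR k.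
have few_uninverted : (INR n + 1) * (INR (k + r) - 1) ^ n <= 0.4 * INR (k + r) ^ n.
  apply: succ_mul_pow_pred_le; rewrite plus_INR; first lra.
  case: hyp => [[n_ge [_ k_le]] | k_le]; last by apply: exp_div_ge_log; lra.
  apply: exp_div_ge_quadratic; first lra.
  have : INR k <= 4 * INR r by have := le_INR _ _ (elimT leP k_le); rewrite mult_INR /=; lra.
  nra.
rewrite binE; move: lower count; set G := #|_| => lower count.
have predE : INR (k + r).-1 = INR k + INR r - 1.
  by have := S_INR (k + r).-1; rewrite prednK ?plus_INR; [lra | lia].
have := le_INR _ _ (elimT leP lower); have := le_INR _ _ (elimT leP count).
rewrite !(mult_INR, INR_expn, plus_INR) S_INR predE; rewrite plus_INR in few_uninverted.
have := pos_INR 'C((k + r).-1, k); have := pos_INR G.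
nra.
Qed.
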